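(* Let $\Gamma=([n],E)$ be a connected simple graph. Then the polytopes $$Q_{\Gamma}=\sum_{\substack{S\subseteq[n]\\ \Gamma|_S\text{ connected}}}\Delta_S\qquad\text{and}\qquad Q^L_{\Gamma}=\sum_{\substack{S\subseteq[n]\\ \Gamma|_S\cong L_{|S|}}}\Delta_S$$ are normally equivalent, i.e. their normal fans coincide.
   Context: $L_r$ is the path graph on $r$ vertices and $\Gamma|_S$ is the induced subgraph on $S$; the sums are Minkowski sums over nonempty subsets $S$. For nonempty $S\subseteq[n]$, $\Delta_S=\mathrm{conv}\{e_s:s\in S\}\subset\mathbb{R}^n$, where $e_s$ are the standard basis vectors. *)

From HB Require Import structures.
From mathcomp Require Import all_boot all_order all_algebra.
From mathcomp Require Import boolp classical_sets.
From mathcomp Require Import reals.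
Set Implicit Arguments. Unset Strict Implicit. Unset Printing Implicit Defensive.
Import Order.TTheory GRing.Theory Num.Theory.
Local Open Scope classical_set_scope.
Local Open Scope ring_scope.

Definition simple_graph (n : nat) (e : rel 'I_n) : Prop :=
  symmetric e /\ irreflexive e.

Definition induced_rel (n : nat) (e : rel 'I_n) (S : {set 'I_n}) : rel 'I_n :=
  fun x y => [&& e x y, x \in S & y \in S].

Definition induced_connected (n : nat) (e : rel 'I_n) (S : {set 'I_n}) : Prop :=
  S != finset.set0 /\ forall x y, x \in S -> y \in S -> connect (induced_rel e S) x y.

Definition graph_connected (n : nat) (e : rel 'I_n) : Prop :=
  induced_connected e [set: 'I_n].

Definition path_graph_rel (k : nat) : rel 'I_k :=
  fun i j => (i.+1 == j :> nat) || (j.+1 == i :> nat).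

(* Gamma|_S is isomorphic to L_{|S|}: a bijection f : 'I_{|S|} -> S
   (injective with image in S, hence onto S by cardinality) carrying the
   path adjacency exactly to the adjacency of Gamma. *)
Definition induced_is_path (n : nat) (e : rel 'I_n) (S : {set 'I_n}) : Prop :=
  exists f : 'I_#|S| -> 'I_n,
    [/\ injective f, forall i, f i \in S &
        forall i j, e (f i) (f j) = path_graph_rel i j].

Definition minkowski_add (R : realType) (n : nat)
  (A B : set 'rV[R]_n) : set 'rV[R]_n :=
  [set x | exists a b, [/\ A a, B b & x = a + b]].

Definition minkowski_sum (R : realType) (n : nat) (P : pred {set 'I_n})
  (F : {set 'I_n} -> set 'rV[R]_n) : set 'rV[R]_n :=
  \big[@minkowski_add R n/[set 0]]_(S | P S) F S.

Definition simplex (R : realType) (n : nat) (S : {set 'I_n}) : set 'rV[R]_n :=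
  [set x | exists lam : 'I_n -> R,
     [/\ forall s, 0 <= lam s,
         forall s, s \notin S -> lam s = 0,
         \sum_(s in S) lam s = 1 &
         x = \sum_(s in S) lam s *: (delta_mx 0 s : 'rV[R]_n)]].

Definition Q_conn (R : realType) (n : nat) (e : rel 'I_n) : set 'rV[R]_n :=
  minkowski_sum (fun S => `[< induced_connected e S >]) (@simplex R n).

Definition Q_path (R : realType) (n : nat) (e : rel 'I_n) : set 'rV[R]_n :=
  minkowski_sum (fun S => (S != finset.set0) && `[< induced_is_path e S >])
    (@simplex R n).

Definition dotv (R : realType) (n : nat) (w x : 'rV[R]_n) : R :=
  \sum_i w 0 i * x 0 i.

Definition face_of (R : realType) (n : nat) (P : set 'rV[R]_n) (w : 'rV[R]_n)
  : set 'rV[R]_n :=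
  [set x | P x /\ forall y, P y -> dotv w y <= dotv w x].

Definition normal_cone (R : realType) (n : nat) (P F : set 'rV[R]_n)
  : set 'rV[R]_n :=
  [set w | F `<=` face_of P w].

(* the normal fan: the set of normal cones of the nonempty faces of P
   (the nonempty faces of a polytope are exactly the sets face_of P w) *)
Definition normal_fan (R : realType) (n : nat) (P : set 'rV[R]_n)
  : set (set 'rV[R]_n) :=
  [set C | exists w, C = normal_cone P (face_of P w)].

Definition normally_equivalent (R : realType) (n : nat) (P Q : set 'rV[R]_n)
  : Prop := normal_fan P = normal_fan Q.

From HB Require Import structures.
From mathcomp Require Import all_boot all_order all_algebra.
From mathcomp Require Import boolp classical_sets reals.
Set Implicit Arguments. Unset Strict Implicit. Unset Printing Implicit Defensive.

(* A normal fan is determined by the preorder face_P(w) <= face_P(w') on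
   linear functionals.  For a Minkowski sum of simplices Delta_S, the face
   maximizing w is the sum of the faces Delta_(argmax_S w), so
   face(w) <= face(w') holds iff, for every summand S, every maximizer of w
   on S also maximizes w' on S.  This condition reads the same over connected
   S and over induced paths S: induced paths are connected, and any two
   vertices s, t of a connected S lie on an induced path inside S (shortcut a
   walk from s to t), on which a maximizer s of w on S still maximizes w. *)

Section InducedPaths.
Variables (n : nat) (e : rel 'I_n).
Hypotheses (e_sym : symmetric e) (e_irr : irreflexive e).

Definition path_adj (i j : nat) := (i.+1 == j) || (j.+1 == i).

Definition induced_path_seq (s : seq 'I_n) := uniq s /\
  forall d i j, i < size s -> j < size s -> e (nth d s i) (nth d s j) = path_adj i j.

Lemma induced_path_seq1 x : induced_path_seq [:: x].
Proof. by split=> // d [|i] [|j] //= _ _; rewrite e_irr. Qed.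

Lemma induced_path_seq_drop k s : induced_path_seq s -> induced_path_seq (drop k s).
Proof.
case=> s_uniq s_adj; split; first exact: drop_uniq.
move=> d i j; rewrite size_drop !nth_drop !ltn_subRL => ltis ltjs.
by rewrite s_adj // /path_adj -!addnS !eqn_add2l.
Qed.

Lemma induced_path_seq_cons x s : induced_path_seq s -> x \notin s ->
  (forall d k, k < size s -> e x (nth d s k) = (k == 0)) ->
  induced_path_seq (x :: s).
Proof.
case=> s_uniq s_adj xNs x_adj; split; first by rewrite /= xNs.
move=> d [|i] [|j] /= ltis ltjs; rewrite /path_adj ?eqSS.
- by rewrite e_irr.
- by rewrite x_adj // orbF eq_sym.
- by rewrite e_sym x_adj // eq_sym.
- by rewrite s_adj.
Qed.

Lemma last_drop (x : 'I_n) k s : k < size s -> last x (drop k s) = last x s.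
Proof.
by move=> ltks; rewrite -[in RHS](cat_take_drop k s) last_cat (drop_nth x ltks).
Qed.

(* If x occurs in s, cut s just before x; otherwise attach x to its last
   neighbour in s, which makes x adjacent to the first vertex only. *)
Lemma induced_path_seq_prepend x s : induced_path_seq s -> has (e x) s ->
  exists t, [/\ induced_path_seq (x :: t), last x t = last x s & {subset t <= s}].
Proof.
move=> s_path x_adj; have [xs | xNs] := boolP (x \in s).
  have ltks : index x s < size s by rewrite index_mem.
  have drop_x := drop_nth x ltks; rewrite nth_index // in drop_x.
  exists (drop (index x s).+1 s); split.
  - by rewrite -drop_x; apply: induced_path_seq_drop.
  - by have := last_drop x ltks; rewrite drop_x.
  - by move=> z /mem_drop.
have x_adj_at : exists i, (i < size s) && e x (nth x s i).
  by have [i ltis e_x_si] := has_nthP x x_adj; exists i; rewrite ltis.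
have bounded i : (i < size s) && e x (nth x s i) -> i <= size s.
  by case/andP=> /ltnW.
have [i /andP[ltis e_x_si] i_max] := ex_maxnP x_adj_at bounded.
exists (drop i s); split; last 2 first.
- exact: last_drop.
- by move=> z /mem_drop.
apply: induced_path_seq_cons; first exact: induced_path_seq_drop.
  by apply: contra xNs => /mem_drop.
move=> d [|k]; rewrite size_drop nth_drop ltn_subRL => ltks.
  by rewrite addn0 (set_nth_default x).
apply/negbTE/negP; rewrite (set_nth_default x) // => e_x_sk.
by have := i_max (i + k.+1); rewrite ltks e_x_sk addnS ltnNge leq_addr => /(_ isT).
Qed.

Lemma walk_shortcut (S : {set 'I_n}) x p : x \in S -> path (induced_rel e S) x p ->
  exists t, [/\ induced_path_seq (x :: t), last x t = last x p & {subset t <= S}].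
Proof.
elim: p x => [|v p IHp] x xS /=.
  by exists [::]; split; first exact: induced_path_seq1.
case/andP=> /and3P[e_xv _ vS] /(IHp v vS)[t [vt_path last_t tS]].
have [|t' [xt'_path last_t' t't]] := induced_path_seq_prepend (x := x) vt_path.
  by rewrite /= e_xv.
exists t'; split=> //; first by rewrite last_t'.
by move=> z /t't; rewrite inE => /predU1P[->|/tS].
Qed.

Lemma induced_is_path_of_seq x s : induced_path_seq (x :: s) ->
  induced_is_path e [set z in x :: s].
Proof.
case=> xs_uniq xs_adj.
have card_xs : #|[set z in x :: s]| = size (x :: s).
  by rewrite cardsE; apply/card_uniqP.
exists (fun i => nth x (x :: s) i); split.
- move=> i j /eqP; rewrite nth_uniq -?card_xs // => /eqP; exact: val_inj.
- by move=> i; rewrite inE mem_nth // -card_xs.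
- by move=> i j; rewrite xs_adj // -card_xs.
Qed.

Lemma connected_induced_path_through (S : {set 'I_n}) x y :
  induced_connected e S -> x \in S -> y \in S ->
  exists2 T : {set 'I_n}, T \subset S & [/\ x \in T, y \in T & induced_is_path e T].
Proof.
case=> _ S_conn xS yS; have /connectP[p p_walk ->] := S_conn x y xS yS.
have [t [xt_path last_t tS]] := walk_shortcut xS p_walk.
exists [set z in x :: t].
  by apply/fintype.subsetP => z; rewrite inE => /predU1P[->|/tS].
split; last exact: induced_is_path_of_seq.
- by rewrite inE mem_head.
- by rewrite inE -last_t mem_last.
Qed.

Lemma induced_rel_sym (S : {set 'I_n}) : symmetric (induced_rel e S).
Proof. by move=> x y; rewrite /induced_rel e_sym [(x \in S) && _]andbC. Qed.

Lemma induced_path_connected (S : {set 'I_n}) :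
  S != finset.set0 -> induced_is_path e S -> induced_connected e S.
Proof.
move=> S0 [f [f_inj fS f_adj]]; split=> //.
have im_f : f @: [set: 'I_#|S|] = S.
  apply/eqP; rewrite eqEcard card_imset // cardsT card_ord leqnn andbT.
  by apply/fintype.subsetP => _ /imsetP[i _ ->].
have conn_step k (i j : 'I_#|S|) : i + k = j -> connect (induced_rel e S) (f i) (f j).
  elim: k j => [|k IHk] j ij; first by rewrite addn0 in ij; rewrite (val_inj ij).
  have ltiks : i + k < #|S| by have := ltn_ord j; rewrite -ij addnS => /ltnW.
  apply: connect_trans (IHk (Ordinal ltiks) erefl) (connect1 _).
  by rewrite /induced_rel !fS f_adj /path_graph_rel /= -ij addnS eqxx.
move=> x y; rewrite -{1 2}im_f => /imsetP[i _ ->] /imsetP[j _ ->].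
have [le_ij | /ltnW le_ji] := leqP i j.
  by apply: (conn_step (j - i)); rewrite subnKC.
rewrite (sym_connect_sym (induced_rel_sym S)).
by apply: (conn_step (i - j)); rewrite subnKC.
Qed.
End InducedPaths.

Import Order.TTheory GRing.Theory Num.Theory.
Local Open Scope classical_set_scope.
Local Open Scope ring_scope.

Section Argmax.
Variables (T : finType) (R : numDomainType).
Implicit Types (S U : {set T}) (f g : T -> R).

Definition is_argmax S f s := s \in S /\ forall t, t \in S -> f t <= f s.

Definition argmax_incl S f g := forall s, is_argmax S f s -> is_argmax S g s.

Lemma argmax_incl_of_cover S f g :
  (forall x y, x \in S -> y \in S ->
     exists2 U : {set T}, U \subset S & [/\ x \in U, y \in U & argmax_incl U f g]) ->
  argmax_incl S f g.
Proof.
move=> cover s [sS s_max]; split=> // t tS.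
have [U /fintype.subsetP US [sU tU incl_U]] := cover s t sS tS.
by have [_ s_max'] := incl_U s (conj sU (fun u uU => s_max u (US u uU))); apply: s_max'.
Qed.
End Argmax.

Lemma argmax_incl_connected_iff_path (R : numDomainType) (n : nat) (e : rel 'I_n)
    (f g : 'I_n -> R) : symmetric e -> irreflexive e ->
  (forall S, induced_connected e S -> argmax_incl S f g) <->
  (forall S, S != finset.set0 -> induced_is_path e S -> argmax_incl S f g).
Proof.
move=> e_sym e_irr; split=> incl S.
  by move=> S0 S_path; apply/incl/induced_path_connected.
move=> S_conn; apply: argmax_incl_of_cover => x y xS yS.
have [U US [xU yU U_path]] := connected_induced_path_through e_sym e_irr S_conn xS yS.
by exists U => //; split=> //; apply: incl => //; apply/set0Pn; exists x.
Qed.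

Section MinkowskiSum.
Variables (R : realType) (n : nat).
Implicit Types (w x y z : 'rV[R]_n) (F : {set 'I_n} -> set 'rV[R]_n).

Lemma big_minkowski_addP (I : eqType) (r : seq I) (P : pred I)
    (F : I -> set 'rV[R]_n) x : uniq r ->
  (\big[@minkowski_add R n/[set 0]]_(i <- r | P i) F i) x <->
  exists g : I -> 'rV[R]_n,
    (forall i, i \in r -> P i -> F i (g i)) /\ x = \sum_(i <- r | P i) g i.
Proof.
elim: r x => [|i0 r IHr] x; rewrite ?big_nil.
  split=> [-> | [g [_ ->]]]; last by rewrite big_nil.
  by exists (fun=> 0); rewrite big_nil.
case/andP=> i0Nr r_uniq; rewrite !big_cons.
case: ifP => P_i0; last first.
  rewrite IHr //; split=> -[g [Fg ->]]; exists g; rewrite big_cons P_i0; split=> // i.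
    by rewrite inE => /predU1P[-> /[!P_i0] | /Fg].
  by move=> ir; apply: Fg; rewrite inE ir orbT.
split=> [[a [b [Fa /(IHr _ r_uniq)[g [Fg ->]] ->]]] | [g [Fg ->]]].
  exists (fun i => if i == i0 then a else g i); split.
    by move=> i; rewrite inE; case: eqP => [-> | _ /= /Fg].
  rewrite big_cons P_i0 eqxx; congr (_ + _).
  rewrite [LHS]big_seq_cond [RHS]big_seq_cond; apply: eq_bigr => i /andP[ir _].
  by case: eqP ir => // ->; rewrite (negbTE i0Nr).
exists (g i0), (\sum_(i <- r | P i) g i); split; last by rewrite big_cons P_i0.
  by apply: Fg; rewrite ?mem_head.
by apply/IHr => //; exists g; split=> // i ir; apply: Fg; rewrite inE ir orbT.
Qed.

Lemma minkowski_sumP (fam : pred {set 'I_n}) F x : minkowski_sum fam F x <->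
  exists g : {set 'I_n} -> 'rV[R]_n,
    (forall S, fam S -> F S (g S)) /\ x = \sum_(S | fam S) g S.
Proof.
rewrite /minkowski_sum big_minkowski_addP ?index_enum_uniq //.
split=> -[g [Fg ->]]; exists g; split=> // S; last by move=> _; apply: Fg.
by apply: Fg; exact: mem_index_enum.
Qed.

Lemma dotvD w x y : dotv w (x + y) = dotv w x + dotv w y.
Proof. by rewrite /dotv -big_split; apply: eq_bigr => i _; rewrite mxE mulrDr. Qed.

Lemma dotv0 w : dotv w 0 = 0.
Proof. by rewrite /dotv big1 // => i _; rewrite mxE mulr0. Qed.

Lemma dotv_sum (I : Type) (r : seq I) (P : pred I) (g : I -> 'rV[R]_n) w :
  dotv w (\sum_(i <- r | P i) g i) = \sum_(i <- r | P i) dotv w (g i).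
Proof. exact: (big_morph _ (dotvD w) (dotv0 w)). Qed.

Section Faces.
Variables (fam : pred {set 'I_n}) (F : {set 'I_n} -> set 'rV[R]_n).
Let P := minkowski_sum fam F.

Lemma face_minkowski_sum w (g : {set 'I_n} -> 'rV[R]_n) :
  (forall S, fam S -> face_of (F S) w (g S)) -> face_of P w (\sum_(S | fam S) g S).
Proof.
move=> g_face; split; first by apply/minkowski_sumP; exists g; split=> // S /g_face[].
move=> y /minkowski_sumP[h [Fh ->]]; rewrite !dotv_sum; apply: ler_sum => S famS.
by have [_ g_max] := g_face S famS; apply/g_max/Fh.
Qed.

(* Replacing the summand g S0 by any z in F S0 stays in P, so g S0 must
   already maximize w on F S0. *)
Lemma face_minkowski_sum_summand w (g : {set 'I_n} -> 'rV[R]_n) S0 :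
  (forall S, fam S -> F S (g S)) -> face_of P w (\sum_(S | fam S) g S) ->
  fam S0 -> face_of (F S0) w (g S0).
Proof.
move=> Fg [_ g_max] famS0; split=> [|z Fz]; first exact: Fg.
pose g' S := if S == S0 then z else g S.
have split_S0 h : dotv w (\sum_(S | fam S) h S) =
    dotv w (h S0) + \sum_(S | fam S && (S != S0)) dotv w (h S).
  by rewrite dotv_sum (bigD1 S0).
have : dotv w (\sum_(S | fam S) g' S) <= dotv w (\sum_(S | fam S) g S).
  apply: g_max; apply/minkowski_sumP; exists g'; split=> // S famS.
  by rewrite /g'; case: eqP => [-> | _]; [| apply: Fg].
rewrite !split_S0 /g' eqxx (eq_bigr (fun S => dotv w (g S))) ?lerD2r //.
by move=> S /andP[_ /negbTE ->].
Qed.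

Lemma face_minkowski_sum_subset_iff w w' :
  (forall S v, fam S -> exists y, face_of (F S) v y) ->
  face_of P w `<=` face_of P w' <->
  (forall S, fam S -> face_of (F S) w `<=` face_of (F S) w').
Proof.
move=> faces_nonempty; split=> [incl S0 famS0 y y_face | incl x [Px x_max]].
  have /choice[g0 g0_face] S : exists z, fam S -> face_of (F S) w z.
    have [famS | _] := boolP (fam S); last by exists 0.
    by have [z] := faces_nonempty S w famS; exists z.
  pose g S := if S == S0 then y else g0 S.
  have g_face S : fam S -> face_of (F S) w (g S).
    by rewrite /g; case: eqP => [-> | _ /g0_face].
  have := face_minkowski_sum_summand (S0 := S0) _ (incl _ (face_minkowski_sum g_face)).
  by rewrite /g eqxx; apply=> // S /g_face[].
have [g [Fg x_eq]] := (minkowski_sumP _ _ _).1 Px.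
rewrite x_eq; apply: face_minkowski_sum => S famS; apply: incl => //.
by apply: face_minkowski_sum_summand => //; rewrite -x_eq.
Qed.
End Faces.
End MinkowskiSum.

Section Simplex.
Variables (R : realType) (n : nat).
Implicit Types (S : {set 'I_n}) (w y z : 'rV[R]_n).

Lemma argmax_exists S (f : 'I_n -> R) : S != finset.set0 -> exists s, is_argmax S f s.
Proof.
case/set0Pn=> s0 Ss0; have [s Ss s_max] := @arg_maxP _ _ _ s0 (mem S) f Ss0.
by exists s.
Qed.

Lemma simplex_coords S y : simplex S y ->
  [/\ forall i, 0 <= y 0 i, forall i, i \notin S -> y 0 i = 0 & \sum_i y 0 i = 1].
Proof.
case=> lam [lam_ge0 lam_out lam_sum1 ->].
have -> : \sum_(s in S) lam s *: 'e_s = \row_s lam s :> 'rV[R]_n.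
  rewrite [RHS]row_sum_delta big_mkcond; apply: eq_bigr => s _.
  by rewrite mxE; case: ifP => // /negbT /lam_out ->; rewrite scale0r.
split=> [i | i /lam_out | ]; rewrite ?mxE //.
rewrite -lam_sum1 [RHS]big_mkcond; apply: eq_bigr => s _.
by rewrite mxE; case: ifP => // /negbT /lam_out.
Qed.

Lemma simplex_delta S s : s \in S -> simplex S ('e_s : 'rV[R]_n).
Proof.
move=> Ss; exists (fun t => (t == s)%:R); split.
- by move=> t; rewrite ler0n.
- by move=> t; case: eqP => // ->; rewrite Ss.
- by rewrite (bigD1 s) //= eqxx big1 ?addr0 // => t /andP[_ /negbTE ->].
- rewrite (bigD1 s) //= eqxx scale1r big1 ?addr0 // => t /andP[_ /negbTE ->].
  by rewrite scale0r.
Qed.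

Lemma dotv_delta w s : dotv w 'e_s = w 0 s.
Proof.
rewrite /dotv (bigD1 s) //= big1 => [|i ne_is]; first by rewrite mxE !eqxx mulr1 addr0.
by rewrite mxE eqxx (negbTE ne_is) mulr0.
Qed.

Lemma dotv_simplex_le S w z (m : R) :
  (forall t, t \in S -> w 0 t <= m) -> simplex S z -> dotv w z <= m.
Proof.
move=> le_m /simplex_coords[z_ge0 z_out z_sum1].
rewrite -[m]mulr1 -z_sum1 mulr_sumr; apply: ler_sum => i _.
have [iS | /z_out ->] := boolP (i \in S); last by rewrite !mulr0.
by apply: ler_wpM2r; [apply: z_ge0 | apply: le_m].
Qed.

Lemma face_simplex_delta S w s : is_argmax S (w 0) s -> face_of (simplex S) w 'e_s.
Proof.
case=> Ss s_max; split=> [|z Sz]; first exact: simplex_delta.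
by rewrite dotv_delta; apply: dotv_simplex_le Sz.
Qed.

(* Comparing with the vertex of a maximizer a: the nonnegative terms
   (w a - w j) y j sum to w a - <w, y> <= 0, hence all vanish. *)
Lemma face_simplex_support S w y i :
  face_of (simplex S) w y -> 0 < y 0 i -> is_argmax S (w 0) i.
Proof.
case=> Sy y_max yi_gt0; have [y_ge0 y_out y_sum1] := simplex_coords Sy.
have iS : i \in S by apply: contraTT yi_gt0 => /y_out ->; rewrite ltxx.
have [a [aS a_max]] : exists a, is_argmax S (w 0) a.
  by apply: argmax_exists; apply/set0Pn; exists i.
have gap_ge0 j : 0 <= (w 0 a - w 0 j) * y 0 j.
  have [jS | /y_out ->] := boolP (j \in S); last by rewrite mulr0.
  by rewrite mulr_ge0 ?subr_ge0 ?a_max.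
have gap_sum0 : \sum_j (w 0 a - w 0 j) * y 0 j = 0.
  apply/eqP; rewrite eq_le sumr_ge0 ?andbT //.
  under eq_bigr do rewrite mulrBl.
  rewrite sumrB -mulr_sumr y_sum1 mulr1 subr_le0.
  by have := y_max _ (simplex_delta aS); rewrite dotv_delta.
have /(_ i isT)/eqP := psumr_eq0P (fun j _ => gap_ge0 j) gap_sum0.
rewrite mulf_eq0 (gt_eqF yi_gt0) orbF subr_eq0 => /eqP w_ai.
by split=> // t tS; rewrite -w_ai a_max.
Qed.

Lemma face_simplex_of_support S w y : S != finset.set0 -> simplex S y ->
  (forall i, 0 < y 0 i -> is_argmax S (w 0) i) -> face_of (simplex S) w y.
Proof.
move=> S0 Sy supp_max; split=> // z Sz; have [y_ge0 _ y_sum1] := simplex_coords Sy.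
have [a [aS a_max]] := argmax_exists (w 0) S0.
apply: le_trans (dotv_simplex_le a_max Sz) _.
rewrite /dotv -[w 0 a]mulr1 -y_sum1 mulr_sumr; apply: ler_sum => i _.
have := y_ge0 i; rewrite le0r => /predU1P[-> | yi_gt0]; first by rewrite !mulr0.
by have [iS i_max] := supp_max i yi_gt0; apply: ler_wpM2r; [apply: ltW | apply: i_max].
Qed.

Lemma face_simplex_subset_iff S w w' : S != finset.set0 ->
  face_of (simplex S) w `<=` face_of (simplex S) w' <-> argmax_incl S (w 0) (w' 0).
Proof.
move=> S0; split=> [incl s s_max | incl y y_face].
  by apply: (face_simplex_support (incl _ (face_simplex_delta s_max))); rewrite mxE !eqxx.
apply: face_simplex_of_support => // [|i yi_gt0]; first by case: y_face.
exact/incl/(face_simplex_support y_face).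
Qed.
End Simplex.

Lemma face_sum_simplex_subset_iff (R : realType) (n : nat) (fam : pred {set 'I_n})
    (w w' : 'rV[R]_n) : (forall S, fam S -> S != finset.set0) ->
  face_of (minkowski_sum fam (@simplex R n)) w `<=`
    face_of (minkowski_sum fam (@simplex R n)) w' <->
  (forall S, fam S -> argmax_incl S (w 0) (w' 0)).
Proof.
move=> fam_neq0; rewrite face_minkowski_sum_subset_iff; last first.
  move=> S v /fam_neq0/(argmax_exists (v 0))[s s_max].
  by exists 'e_s; apply: face_simplex_delta.
by split=> incl S famS; move: (incl S famS); rewrite face_simplex_subset_iff ?fam_neq0.
Qed.

Lemma normally_equivalent_of_face_subset (R : realType) (n : nat) (P Q : set 'rV[R]_n) :
  (forall w w', face_of P w `<=` face_of P w' <-> face_of Q w `<=` face_of Q w') ->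
  normally_equivalent P Q.
Proof.
move=> PQ; have cones w : normal_cone P (face_of P w) = normal_cone Q (face_of Q w).
  by apply/seteqP; split=> w' /PQ.
by apply/seteqP; split=> _ [w ->]; exists w; rewrite cones.
Qed.

Theorem mainTheorem7 (R : realType) (n : nat) (e : rel 'I_n) :
  simple_graph e -> graph_connected e ->
  normally_equivalent (@Q_conn R n e) (@Q_path R n e).
Proof.
move=> [e_sym e_irr] _; apply: normally_equivalent_of_face_subset => w w'.
rewrite !face_sum_simplex_subset_iff => [|S /andP[] | S /asboolP[]] //.
have [conn_path path_conn] := argmax_incl_connected_iff_path (w 0) (w' 0) e_sym e_irr.
split=> incl S.
- case/andP=> S0 /asboolP S_path; apply: conn_path S0 S_path => T T_conn.
  by apply/incl/asboolP.
- move=> /asboolP S_conn; apply: path_conn S_conn => T T0 T_path.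
  by apply: incl; rewrite T0; apply/asboolP.
Qed.
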